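(* Run the UCB-like policy described in the context, with switch budget $L$ (so that $q=q(L,K)=\lfloor (L-N)/(K+1)\rfloor\ge 1$). Then the number of assortment switches $\Psi_T=\sum_{t}\mathbb{I}[S_t\neq S_{t+1}]$ made by the policy is at most $L$.
   Context: Setting: $N$ products $\mathcal N=\{1,\dots,N\}$, a no-purchase option $0$, $K$ resources $\mathcal K=\{1,\dots,K\}$, horizon of $T$ periods. Product $i$ gives revenue $r(i)\in[0,1]$ and consumes $a(i,k)\in[0,1]$ units of resource $k$; $r(0)=a(0,k)=0$. Resource $k$ has initial inventory $Tc(k)$, $c(k)>0$. For $v\in\mathbb R_{>0}^N$ and $S\subseteq\mathcal N$ the MNL probabilities are $\varphi(i,S\mid v)=v_i/(1+\sum_{j\in S}v_j)$ for $i\in S$, $\varphi(0,S\mid v)=1/(1+\sum_{j\in S}v_j)$, $\varphi(i,S\mid v)=0$ for $i\in\mathcal N\setminus S$. The unknown true vector $v^*$ satisfies $v_i^*\in[1/R,R]$. In period $t$ the retailer offers $S_t\subseteq\mathcal N$ and the customer chooses $I_t\in S_t\cup\{0\}$ with conditional probability $\varphi(I_t,S_t\mid v^* )$ given the past. UCB-like policy: parameters $\tau$ (a multiple of $N$), $L$, $\delta\in(0,1)$, $q=\lfloor (L-N)/(K+1)\rfloor$; $\Psi=\frac{R(1+NR)^2}{2}\sqrt{2+4\log\frac{2T^{1/2}q(K+1)N}{\delta}}$, $\varepsilon(n)=(\sqrt N+1)\Psi/\sqrt n$, $\omega=\frac{1}{T\min_k c(k)}\Big(4(\sqrt N+1)\sqrt{1+\frac{NT}{\tau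 q}}\Psi\sqrt{N^2T}+\sqrt{2T\log\frac{4(K+1)}{\delta}}+\frac{2N^2\Psi}{\sqrt\tau}\sqrt{2T\log\frac{4(K+1)}{\delta}}+\tau\Big)$. Warm start: for $i=1,\dots,N$ offer $S_t=\{i\}$ for $t=(i-1)\tau/N+1,\dots,i\tau/N$. Let $T_0=\tau$, $T_\ell=\ell\lfloor (T-\tau)/q\rfloor+\tau$ for $\ell=1,\dots,q$. In epoch $\ell$: let $n_i^{\ell-1}=\sum_{t=1}^{T_{\ell-1}}\mathbb I(i\in S_t)$; compute the MLE $\hat v^\ell=e^{\hat\theta}$, $\hat\theta$ minimizing $\mathcal L_{\ell-1}(\theta)=-\sum_{t=1}^{T_{\ell-1}}\big[\theta_{I_t}-\log(1+\sum_{i\in S_t}e^{\theta_i})\big]$ ($\theta_0:=0$); solve the UCB-LP: maximize $\sum_{S\subseteq\mathcal N}\sum_{i\in S}r(i)\big(\varphi(i,S\mid\hat v^\ell)+\varepsilon(n_i^{\ell-1})\big)y(S)$ subject to $\sum_{S}\sum_{i\in S}a(i,k)\big(\varphi(i,S\mid\hat v^\ell)-\varepsilon(n_i^{\ell-1})\big)y(S)\le(1-\omega)c(k)$ for all $k$, $\sum_S y(S)=1$, $y\ge 0$, obtaining a basic optimal solution $y_\ell$ (at most $K+1$ nonzero entries); draw an assortment independently from $y_\ell$ for each period $T_{\ell-1}+1,\dots,T_\ell$, let $N_\ell(S)$ be the number of draws equal to $S$, and offer each $S$ with $N_\ell(S)>0$ for $N_\ell(S)$ consecutive periods, updating inventories;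 stop once a resource is exhausted. *)

From mathcomp Require Import all_boot all_order all_algebra.
Set Implicit Arguments. Unset Strict Implicit. Unset Printing Implicit Defensive.
Import Order.TTheory GRing.Theory Num.Theory.
Local Open Scope ring_scope.

(* Products are 'I_N (product i of the paper is the ordinal i-1);
   an assortment is a subset {set 'I_N}. *)

Definition switches (N : nat) (s : seq {set 'I_N}) : nat :=
  count (fun p : {set 'I_N} * {set 'I_N} => p.1 != p.2) (zip s (behead s)).

Definition q_of (L N K : nat) : nat := ((L - N) %/ K.+1)%N.

(* Epoch length floor((T - tau)/q), so that T_l = l * epoch_len + tau. *)
Definition epoch_len (T tau q : nat) : nat := ((T - tau) %/ q)%N.

Definition warm_start (N tau : nat) : seq {set 'I_N} :=
  flatten [seq nseq (tau %/ N)%N [set i] | i <- enum 'I_N].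

(* y is a probability vector over assortments with at most K+1 nonzero
   entries (as is any basic optimal solution of the UCB-LP). *)
Definition sparse_distribution (R : numDomainType) (N K : nat)
    (y : {ffun {set 'I_N} -> R}) : Prop :=
  (forall S, (0 <= y S)%R) /\ (\sum_(S : {set 'I_N}) y S = 1)%R /\
  (#|[set S : {set 'I_N} | y S != 0%R]| <= K.+1)%N.

(* A realization of one epoch of length m: the draws give counts cnt S
   (N_l(S)), positive only for S in the support of y, summing to m; each S
   with cnt S > 0 is offered for cnt S consecutive periods, in some order
   ord (a duplicate-free listing of the S with N_l(S) > 0). *)
Definition epoch_realization (R : numDomainType) (N : nat)
    (y : {ffun {set 'I_N} -> R}) (m : nat)
    (ord : seq {set 'I_N}) (cnt : {set 'I_N} -> nat) : Prop :=
  uniq ord /\ (forall S, S \in ord -> (0 < y S)%R /\ (0 < cnt S)%N) /\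
  (\sum_(S <- ord) cnt S)%N = m.

Definition epoch_seq (N : nat) (ord : seq {set 'I_N}) (cnt : {set 'I_N} -> nat)
  : seq {set 'I_N} := flatten [seq nseq (cnt A) A | A <- ord].

Definition policy_seq (N tau q : nat)
    (ord : nat -> seq {set 'I_N}) (cnt : nat -> {set 'I_N} -> nat)
  : seq {set 'I_N} :=
  warm_start N tau ++ flatten [seq epoch_seq (ord l) (cnt l) | l <- iota 1 q].

From mathcomp Require Import all_boot all_order all_algebra.
From mathcomp Require Import zify.
Set Implicit Arguments. Unset Strict Implicit. Unset Printing Implicit Defensive.
Import Order.TTheory.

(* The offered sequence is a concatenation of constant runs: [N] runs in the
   warm start and, in each of the [q] epochs, one run per assortment drawn,
   i.e. at most [K+1] runs since the draws lie in the support of a basic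
   solution.  A switch can only occur at the junction of two runs, so there
   are at most [N + q(K+1) - 1] of them, and [q(K+1) <= L - N] by the choice
   of [q]; stopping early only truncates the sequence. *)

Section Switches.

Variable T : eqType.
Implicit Types (x : T) (s t : seq T).

Definition nswitch s : nat :=
  count (fun p : T * T => p.1 != p.2) (zip s (behead s)).

Lemma nswitch_cons x s : nswitch (x :: s) = (x != head x s) + nswitch s.
Proof. by case: s => [|y s]; rewrite /nswitch //= eqxx. Qed.

Lemma nswitch_nseq n x : nswitch (nseq n x) = 0.
Proof.
elim: n => [|n IHn] //=; rewrite nswitch_cons IHn addn0.
by case: n {IHn} => /=; rewrite eqxx.
Qed.

Lemma nswitch_catl s t : nswitch s <= nswitch (s ++ t).
Proof.
elim: s => [|x s IHs] //; rewrite cat_cons !nswitch_cons.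
case: s IHs => [|y s] IHs; first by rewrite eqxx.
by rewrite leq_add2l.
Qed.

Lemma nswitch_take n s : nswitch (take n s) <= nswitch s.
Proof. by rewrite -{2}(cat_take_drop n s) nswitch_catl. Qed.

Lemma nswitch_cat s t : nswitch (s ++ t) <= nswitch s + (nswitch t).+1.
Proof.
elim: s => [|x s IHs] /=; first exact: leqnSn.
rewrite !nswitch_cons; case: s IHs => [|y s] IHs /=.
  by rewrite eqxx add0n; case: (x != _); rewrite ?add0n ?add1n.
by rewrite -addnA leq_add2l.
Qed.

Lemma nswitch_flatten (ss : seq (seq T)) :
  nswitch (flatten ss) <= (\sum_(s <- ss) (nswitch s).+1).-1.
Proof.
elim: ss => [|s ss IHss] //=; rewrite big_cons.
case: ss IHss => [|s' ss] IHss; first by rewrite /= cats0 big_nil addn0.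
apply: leq_trans (nswitch_cat _ _) _.
by rewrite big_cons in IHss *; lia.
Qed.

Lemma nswitch_flatten_nseq (I : Type) (c : I -> nat) (f : I -> T) (r : seq I) :
  nswitch (flatten [seq nseq (c i) (f i) | i <- r]) <= (size r).-1.
Proof.
apply: leq_trans (nswitch_flatten _) _.
by rewrite big_map (eq_bigr (fun=> 1)) ?sum1_size // => i _; rewrite nswitch_nseq.
Qed.

End Switches.

Lemma switchesE N (s : seq {set 'I_N}) : switches s = nswitch s.
Proof. by []. Qed.

Lemma nswitch_warm_start N tau : nswitch (warm_start N tau) <= N.-1.
Proof.
have := nswitch_flatten_nseq (fun=> tau %/ N) (fun i => [set i]) (enum 'I_N).
by rewrite size_enum_ord.
Qed.

Lemma size_epoch_support (R : numDomainType) N K (y : {ffun {set 'I_N} -> R})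
    m ord cnt :
  sparse_distribution K y -> epoch_realization y m ord cnt ->
  size ord <= K.+1.
Proof.
move=> [_ [_ supp_y]] [uniq_ord [ord_pos _]].
rewrite -(card_uniqP uniq_ord); apply: leq_trans supp_y.
apply/subset_leq_card/subsetP => S /ord_pos[yS_gt0 _].
by rewrite inE gt_eqF.
Qed.

Lemma nswitch_epoch_seq (R : numDomainType) N K (y : {ffun {set 'I_N} -> R})
    m ord cnt :
  sparse_distribution K y -> epoch_realization y m ord cnt ->
  nswitch (epoch_seq ord cnt) <= K.
Proof.
move=> y_sparse real_ord; apply: leq_trans (nswitch_flatten_nseq cnt id ord) _.
by have := size_epoch_support y_sparse real_ord; lia.
Qed.

Lemma nswitch_policy_seq N K tau q (ord : nat -> seq {set 'I_N})
    (cnt : nat -> {set 'I_N} -> nat) :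
  0 < N -> (forall l, 1 <= l <= q -> nswitch (epoch_seq (ord l) (cnt l)) <= K) ->
  nswitch (policy_seq tau q ord cnt) <= (N + q * K.+1).-1.
Proof.
move=> N_gt0 epoch_bound.
have epochs_bound :
    \sum_(l <- iota 1 q) (nswitch (epoch_seq (ord l) (cnt l))).+1 <= q * K.+1.
  rewrite -[X in (_ <= X * _)](size_iota 1) -sum1_size big_distrl /=.
  rewrite big_seq [X in (_ <= X)]big_seq; apply: leq_sum => l.
  by rewrite mem_iota mul1n => /epoch_bound; lia.
rewrite /policy_seq -[_ ++ _]/(flatten (_ :: _)).
apply: leq_trans (nswitch_flatten _) _.
rewrite big_cons big_map.
by have := nswitch_warm_start N tau; lia.
Qed.

Theorem theorem2 (R : realFieldType) (N K T L tau : nat)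
    (y : nat -> {ffun {set 'I_N} -> R})
    (ord : nat -> seq {set 'I_N}) (cnt : nat -> {set 'I_N} -> nat)
    (n_stop : nat) :
  (0 < N)%N -> (N %| tau)%N ->
  (1 <= q_of L N K)%N ->
  (forall l, (1 <= l <= q_of L N K)%N ->
     sparse_distribution K (y l) /\
     epoch_realization (y l) (epoch_len T tau (q_of L N K)) (ord l) (cnt l)) ->
  (n_stop <= T)%N ->
  (switches (take n_stop (policy_seq tau (q_of L N K) ord cnt)) <= L)%N.
Proof.
move=> N_gt0 _ q_gt0 epochs _.
have q_le : q_of L N K * K.+1 <= L - N by apply: leq_trunc_div.
rewrite switchesE; apply: leq_trans (nswitch_take _ _) _.
apply: leq_trans (nswitch_policy_seq (K := K) tau N_gt0 _) _.
  by move=> l /epochs[y_sparse real_l]; apply: nswitch_epoch_seq y_sparse real_l.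
by lia.
Qed.
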